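(* Let $S$ be a right non-degenerate semigroup of skew type with generating set $X$. Then for every $y_1\in X$ and every $m\ge 2$, the map $f_{y_1}:X^{m-1}\to X^{m-1}$ is injective.
   Context: A semigroup of skew type is a monoid $S$ with a monoid presentation $S=\langle x_1,\ldots,x_n \mid x_ix_j=x_kx_l\rangle$ consisting of $\binom{n}{2}$ relations, each of the form $x_ix_j=x_kx_l$ with $i\neq j$, $k\neq l$, such that every word $x_px_q$ with $p\neq q$ appears (as one side) in exactly one of the relations; $X=\{x_1,\ldots,x_n\}$. For $a,b\in X$ define the partner $\overline{a}\,\overline{b}$ of the word $ab$: if $a\neq b$, it is the other side of the unique defining relation containing $ab$; if $a=b$, it is $ab$ itself. $S$ is right non-degenerate if for every $x\in X$ the map $X\to X$ sending $y$ to the first letter of the partner of $xy$ is surjective (equivalently: for every $x,z\in X$ there is a relation $xy=zt$, allowing the trivial one $xx=xx$). Let $Y$ be the free monoid on $X$ and $X^{m-1}\subseteq Y$ the set of words of length $m-1$. For $m\ge2$ and $y_1,\ldots,y_m\in X$, define $g_i(y_1\cdots y_m)=y_1\cdots y_{i-1}\overline{y}_i\overline{y}_{i+1}y_{i+2}\cdots y_m$ for $1\le i\le m-1$, where $\overline{y}_i\overline{y}_{i+1}$ is the partner of $y_iy_{i+1}$, and $g(y_1\cdots y_m)=g_{m-1}\cdots g_2g_1(y_1\cdots y_m)$. If $g(y_1\cdots y_m)=s_1\cdots s_m$ with $s_i\in X$, set $f_{y_1}(y_2\cdots y_m)=s_1\cdots s_{m-1}$. *)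

From mathcomp Require Import all_boot.
Set Implicit Arguments. Unset Strict Implicit. Unset Printing Implicit Defensive.

(* Generators X = {x_1,...,x_n} are encoded as 'I_n.
   A two-letter word x_a x_b is encoded as the pair (a, b).
   A defining relation  x_i x_j = x_k x_l  is encoded as ((i,j),(k,l)). *)
Definition word2 (n : nat) := ('I_n * 'I_n)%type.
Definition relation (n : nat) := (word2 n * word2 n)%type.

Definition skew_type (n : nat) (rels : seq (relation n)) : Prop :=
  [/\ size rels = 'C(n, 2),
      all (fun r : relation n => (r.1.1 != r.1.2) && (r.2.1 != r.2.2)) rels
    & forall p q : 'I_n, p != q ->
        count (fun r : relation n => (r.1 == (p, q)) || (r.2 == (p, q))) rels = 1].

Definition partner (n : nat) (rels : seq (relation n)) (a b : 'I_n) : word2 n :=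
  if a == b then (a, b) else
  match [seq r <- rels | (r.1 == (a, b)) || (r.2 == (a, b))] with
  | r :: _ => if r.1 == (a, b) then r.2 else r.1
  | [::] => (a, b)
  end.

Definition right_nondegenerate (n : nat) (rels : seq (relation n)) : Prop :=
  forall x : 'I_n, forall z : 'I_n, exists y : 'I_n, (partner rels x y).1 = z.

(* g_i (0-indexed here: gi i acts on positions i and i+1, i.e. it is the
   paper's g_{i+1}):  replaces y_i y_{i+1} by its partner. *)
Definition gi (n : nat) (rels : seq (relation n)) (i : nat) (w : seq 'I_n)
  : seq 'I_n :=
  match drop i w with
  | a :: b :: rest => take i w ++ [:: (partner rels a b).1; (partner rels a b).2] ++ rest
  | _ => w
  end.

Definition gmap (n : nat) (rels : seq (relation n)) (w : seq 'I_n) : seq 'I_n :=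
  foldl (fun v i => gi rels i v) w (iota 0 (size w).-1).

Definition fmap (n : nat) (rels : seq (relation n)) (y1 : 'I_n) (w : seq 'I_n)
  : seq 'I_n :=
  take (size w) (gmap rels (y1 :: w)).

From mathcomp Require Import all_boot.

(* The sweep g carries the first letter to the right through the word: if
   s x' is the partner of x y, then f_x(y w) = s f_x'(w).  For a right
   non-degenerate S the map y |-> s is onto the finite alphabet, hence
   injective, and injectivity of f_x follows by induction on the word. *)

Lemma surjF_inj (T : finType) (f : T -> T) :
  (forall y, exists x, f x = y) -> injective f.
Proof.
move=> f_surj x y; apply: (@image_injP _ _ f T) => //.
apply/eqP/eq_card => z; rewrite !inE.
by have [t <-] := f_surj z; rewrite codom_f.
Qed.

Section Sweep.

Variables (n : nat) (rels : seq (relation n)).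

Lemma gi_cons i a w : gi rels i.+1 (a :: w) = a :: gi rels i w.
Proof. by rewrite /gi /=; case: (drop i w) => [|b [|c r]]. Qed.

Lemma foldl_gi_cons a w i k :
  foldl (fun v j => gi rels j v) (a :: w) (iota i.+1 k)
  = a :: foldl (fun v j => gi rels j v) w (iota i k).
Proof. by elim: k i a w => [|k IHk] i a w //=; rewrite gi_cons IHk. Qed.

Lemma gmap_cons x y w :
  gmap rels [:: x, y & w]
  = (partner rels x y).1 :: gmap rels ((partner rels x y).2 :: w).
Proof. by rewrite /gmap /= {1}/gi /= foldl_gi_cons. Qed.

Lemma fmap_cons x y w :
  fmap rels x (y :: w)
  = (partner rels x y).1 :: fmap rels (partner rels x y).2 w.
Proof. by rewrite /fmap gmap_cons. Qed.

Lemma fmap_inj x : right_nondegenerate rels -> injective (fmap rels x).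
Proof.
move=> rnd u; elim: u x => [|y u IHu] x [|y' v] //;
  rewrite !fmap_cons // => -[eq_head eq_tail].
have eq_y : y = y' by apply: surjF_inj (rnd x) _ _ eq_head.
by rewrite -eq_y in eq_tail *; rewrite (IHu _ _ eq_tail).
Qed.

End Sweep.

Theorem lemma4p1 (n : nat) (rels : seq (relation n)) :
  skew_type rels -> right_nondegenerate rels ->
  forall (y1 : 'I_n) (m : nat), 2 <= m ->
  forall u v : seq 'I_n, size u = m.-1 -> size v = m.-1 ->
    fmap rels y1 u = fmap rels y1 v -> u = v.
Proof.
move=> _ rnd y1 m _ u v _ _.
exact: fmap_inj.
Qed.
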